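(* Let $w,n$ be positive integers with $w\le n$ such that $r:=\binom{n}{w}/\lfloor n/w\rfloor$ is an even integer. Let $a$ be the remainder of $n$ divided by $w$ and suppose $2a<w$. Suppose that there exists a $2$-good almost-regular edge-coloring of $K_n^w$. Then there exists a $\mathrm{TOC}_3(n,2w-1,w)$.
   Context: $\mathcal{H}_q(n,w)$ is the set of all words of length $n$ over $\mathbb{Z}_q$ with exactly $w$ nonzero entries, with the Hamming distance. An $(n,d,w)_q$-code is a nonempty subset of $\mathcal{H}_q(n,w)$ in which any two distinct words have Hamming distance at least $d$; $A_q(n,d,w)$ is the maximum size of such a code, and a code of this size is optimal. A $\mathrm{TOC}_q(n,d,w)$ is a partition of $\mathcal{H}_q(n,w)$ into optimal $(n,d,w)_q$-codes. $K_n^w$ is the complete $w$-uniform hypergraph on vertex set $[n]$. A sub-hypergraph with vertex set $[n]$ is almost-regular if the degrees of any two vertices differ by at most one. Suppose $g\mid r$ where $r=\binom{n}{w}/\lfloor n/w\rfloor$. An almost-regular edge-coloring $\{\mathcal{F}_{i,j}:1\le i\le r/g,\,1\le j\le g\}$ of $K_n^w$ is a partition of the edges of $K_n^w$ into classes $\mathcal{F}_{i,j}$, each an almost-regular sub-hypergraph (on vertex set $[n]$) with exactly $\lfloor n/w\rfloor$ edges. It is $g$-good if for each $i$ the union $\mathcal{A}_i=\bigcup_{j=1}^g\mathcal{F}_{i,j}$ is the block set of a packing $\mathrm{P}(2,w,n)$, i.e. every pair of elements of $[n]$ is contained in at most one edge of $\mathcal{A}_i$. *)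

From mathcomp Require Import all_boot.
Set Implicit Arguments. Unset Strict Implicit. Unset Printing Implicit Defensive.

(* Words of length n over Z_q: Z_q represented by 'I_q (the element 0 is
   the ordinal with value 0). *)
Definition word (q n : nat) := {ffun 'I_n -> 'I_q}.

Definition wt (q n : nat) (x : word q n) : nat :=
  #|[set i : 'I_n | nat_of_ord (x i) != 0]|.

Definition hdist (q n : nat) (x y : word q n) : nat :=
  #|[set i : 'I_n | x i != y i]|.

Definition Hqnw (q n w : nat) : {set word q n} := [set x | wt x == w].

Definition is_code (q n d w : nat) (C : {set word q n}) : bool :=
  [&& C != set0, C \subset Hqnw q n w &
   [forall x in C, forall y in C, (x != y) ==> (d <= hdist x y)]].

Definition Aq (q n d w : nat) : nat :=
  \max_(C : {set word q n} | is_code d w C) #|C|.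

Definition optimal_code (q n d w : nat) (C : {set word q n}) : bool :=
  is_code d w C && (#|C| == Aq q n d w).

Definition TOC (q n d w : nat) (P : {set {set word q n}}) : Prop :=
  partition P (Hqnw q n w) /\ forall C, C \in P -> optimal_code d w C.

Definition rr (n w : nat) : nat := 'C(n, w) %/ (n %/ w).

Definition hdeg (n : nat) (E : {set {set 'I_n}}) (v : 'I_n) : nat :=
  #|[set e in E | v \in e]|.

Definition almost_regular (n : nat) (E : {set {set 'I_n}}) : Prop :=
  forall u v : 'I_n, hdeg E u <= (hdeg E v).+1.

(* Almost-regular edge-coloring {F_{i,j} : i < r/g, j < g} of K_n^w
   (indices shifted to start at 0). *)
Definition almost_regular_coloring (n w g : nat)
  (F : 'I_(rr n w %/ g) -> 'I_g -> {set {set 'I_n}}) : Prop :=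
  (forall i j e, e \in F i j -> #|e| = w) /\
  (forall e : {set 'I_n}, #|e| = w ->
     exists! ij : 'I_(rr n w %/ g) * 'I_g, e \in F ij.1 ij.2) /\
  (forall i j, almost_regular (F i j) /\ #|F i j| = n %/ w).

Definition is_packing (n : nat) (A : {set {set 'I_n}}) : Prop :=
  forall x y : 'I_n, x != y ->
    forall e1 e2, e1 \in A -> e2 \in A ->
      x \in e1 -> y \in e1 -> x \in e2 -> y \in e2 -> e1 = e2.

Definition good_coloring (n w g : nat)
  (F : 'I_(rr n w %/ g) -> 'I_g -> {set {set 'I_n}}) : Prop :=
  almost_regular_coloring F /\
  forall i, is_packing (\bigcup_(j < g) F i j).

From mathcomp Require Import all_boot perm zify.
Set Implicit Arguments. Unset Strict Implicit. Unset Printing Implicit Defensive.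

(* The colour classes F_{i,j} are matchings: a point of degree two would force
   every degree to be positive, but floor(n/w) blocks of size w cover at most n
   points.  So A_i = F_{i,0} u F_{i,1} is a union of two matchings, and Konig's
   edge-colouring theorem colours the points with w colours, injectively on every
   block of A_i.  For each pattern t : [w] -> {0,1}, the words supported on a
   block e of A_i that carry 1 or 2 at v according to t (colour v), flipped when
   e is in F_{i,1}, form a code C_{i,t} of size 2 floor(n/w).  Blocks of one
   matching are disjoint and two blocks of A_i meet in at most one point, where
   the flip separates the two words, so the distance is at least 2w - 1.
   Conversely, in a code of distance 2w - 1 each nonzero symbol occurs at most
   once per coordinate, whence |C| w <= 2n and, as 2 (n mod w) < w,
   |C| <= 2 floor(n/w).  The support and the symbols of a word of weight w
   determine i and t, so the codes C_{i,t} partition H_3(n,w). *)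

Lemma sum_card_exchange (A B : finType) (X : {set A}) (r : A -> B -> bool) :
  \sum_(a in X) #|[set b | r a b]| = \sum_b #|[set a in X | r a b]|.
Proof.
under eq_bigr do rewrite -sum1dep_card big_mkcond /=.
rewrite exchange_big; apply: eq_bigr => b _.
rewrite -sum1dep_card big_mkcond [RHS]big_mkcond /=.
by apply: eq_bigr => a _; case: (a \in X).
Qed.

Lemma almost_regular_trivIset n w (E : {set {set 'I_n}}) :
  (forall e, e \in E -> #|e| = w) -> almost_regular E -> #|E| = n %/ w -> trivIset E.
Proof.
move=> sizeE regE cardE.
have ti_of_cover : cover E = setT -> trivIset E.
  move=> coverT; have [_ <-] := leq_card_cover E; rewrite eqn_leq leq_card_cover /=.
  by rewrite coverT cardsT card_ord (eq_bigr (fun=> w)) ?sum_nat_const ?cardE ?leq_divM.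
apply/trivIsetP => A B AE BE neqAB; apply/pred0P => x /=; apply/negbTE/andP => -[xA xB].
have deg2 : 1 < hdeg E x.
  have := cards2 A B; rewrite neqAB /hdeg => <-; apply: subset_leq_card.
  by apply/subsetP => e; rewrite !inE => /orP[] /eqP->; rewrite ?AE ?BE ?xA ?xB.
have /ti_of_cover/trivIsetP/(_ A B AE BE neqAB)/pred0P/(_ x) : cover E = setT.
  apply/setP => y; rewrite inE; have /card_gt0P[e] : 0 < hdeg E y.
    by have := regE x y; lia.
  by rewrite inE => /andP[eE ye]; apply/bigcupP; exists e.
by rewrite /= xA xB.
Qed.

Lemma packing_meet_le1 n (A : {set {set 'I_n}}) e f :
  is_packing A -> e \in A -> f \in A -> e != f -> #|e :&: f| <= 1.
Proof.
move=> packA eA fA; apply: contraR; rewrite -ltnNge.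
case/card_gt1P => x [y [/setIP[xe xf] /setIP[ye yf] neq_xy]].
by apply/eqP; apply: packA neq_xy e f eA fA xe ye xf yf.
Qed.

Definition supp q n (x : word q n) : {set 'I_n} := [set i | x i != 0 :> nat].

Lemma hdist_lt_card_suppU q n (x y : word q n) i :
  x i != 0 :> nat -> x i = y i -> hdist x y < #|supp x :|: supp y|.
Proof.
move=> ix xyi; apply: proper_card; apply/properP; split; last first.
  by exists i; [rewrite !inE ix | rewrite inE xyi eqxx].
apply/subsetP => j; rewrite !inE => xyj; apply: contraR xyj.
by rewrite negb_or !negbK => /andP[/eqP xj /eqP yj]; apply/eqP/val_inj; rewrite /= xj yj.
Qed.

Lemma card_nonzero_ord q : #|[set z : 'I_q | z != 0 :> nat]| = q.-1.
Proof.
case: q => [|q]; first by apply/eqP; rewrite cards_eq0; apply/eqP/setP => -[].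
rewrite -[q]/(q.+1.-1) -[in RHS](card_ord q.+1) -(cardsC1 ord0).
by apply: eq_card => z; rewrite !inE.
Qed.

Lemma code_card_bound q n w (C : {set word q n}) :
  is_code (2 * w - 1) w C -> #|C| * w <= q.-1 * n.
Proof.
case/and3P => _ /subsetP CH /'forall_in_forall_inP dC.
have wC x : x \in C -> #|supp x| = w by move/CH; rewrite inE => /eqP.
rewrite -sum_nat_const (eq_bigr _ (fun x xC => esym (wC x xC))) sum_card_exchange.
have -> : q.-1 * n = \sum_(i < n) q.-1 by rewrite sum_nat_const card_ord mulnC.
apply: leq_sum => i _.
rewrite -card_nonzero_ord -(@card_in_imset _ _ (fun x : word q n => x i)).
  apply: subset_leq_card; apply/subsetP => _ /imsetP[x + ->].
  by rewrite !inE => /andP[].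
move=> x y; rewrite !inE => /andP[xC ix] /andP[yC iy] xyi; apply: contraTeq isT => neq_xy.
have := dC x xC y yC; rewrite neq_xy /=.
have := hdist_lt_card_suppU ix xyi; have := cardsUI (supp x) (supp y).
have : 0 < #|supp x :&: supp y| by apply/card_gt0P; exists i; rewrite !inE ix iy.
rewrite wC // wC //; lia.
Qed.

Lemma Aq_le_div q n w : 0 < w -> Aq q n (2 * w - 1) w <= q.-1 * n %/ w.
Proof. by move=> w_gt0; apply/bigmax_leqP => C /code_card_bound; rewrite leq_divRL. Qed.

Lemma connect_lastP (T : finType) (e : rel T) x z :
  connect e x z -> z = x \/ exists2 y, connect e x y & e y z.
Proof.
case/connectP => p; elim/last_ind: p z => [|p y _] z /=; first by left.
rewrite rcons_path last_rcons => /andP[xp py] ->; right; exists (last x p) => //.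
by apply/connectP; exists p.
Qed.

Lemma mem_pblock_cover (T : finType) (P : {set {set T}}) x y :
  y \in pblock P x -> x \in cover P.
Proof. by rewrite -mem_pblock /pblock; case: pickP => [B /andP[_ xB] | _] //=; rewrite inE. Qed.

(* Konig's edge-colouring theorem for the bipartite multigraph whose vertices are
   the blocks of M1 and of M2 and whose edges are the points. *)
Section TwoMatchingColoring.

Variables (T : finType) (w : nat) (M1 M2 : {set {set T}}).
Hypotheses (w_gt0 : 0 < w) (tiM1 : trivIset M1) (tiM2 : trivIset M2).
Hypotheses (leM1 : forall B, B \in M1 -> #|B| <= w) (leM2 : forall B, B \in M2 -> #|B| <= w).

Definition proper_on (S : {set T}) (c : T -> 'I_w) :=
  forall B, B \in M1 :|: M2 -> {in B :&: S &, injective c}.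

Definition block_colors (M : {set {set T}}) (S : {set T}) (c : T -> 'I_w) v :=
  c @: (pblock M v :&: S).

Lemma block_colorsP (M : {set {set T}}) S c v B y :
  trivIset M -> B \in M -> v \in B -> y \in B :&: S -> c y \in block_colors M S c v.
Proof. by move=> tiM BM vB yBS; rewrite /block_colors (def_pblock tiM BM vB) imset_f. Qed.

Lemma free_block_color (M : {set {set T}}) (S : {set T}) (c : T -> 'I_w) v :
  (forall B, B \in M -> #|B| <= w) -> v \notin S ->
  exists a, a \notin block_colors M S c v.
Proof.
move=> leM vS; have small : #|pblock M v :&: S| < w.
  rewrite /pblock; case: pickP => [B /andP[BM vB] | _] /=; last by rewrite set0I cards0.
  apply: leq_trans (leM B BM); apply: proper_card; apply/properP.
  by split; [exact: subsetIl | exists v; rewrite // inE (negbTE vS) andbF].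
have : 0 < #|~: block_colors M S c v|.
  have := cardsC (block_colors M S c v); rewrite card_ord.
  have := leq_imset_card c (pblock M v :&: S); rewrite -/(block_colors _ _ _ _); lia.
by case/card_gt0P => a; rewrite inE; exists a.
Qed.

Lemma proper_on_extend S (c : T -> 'I_w) v a :
  proper_on S c -> a \notin block_colors M1 S c v -> a \notin block_colors M2 S c v ->
  proper_on (v |: S) [eta c with v |-> a].
Proof.
move=> proper_c aM1 aM2 B BM x y.
have fresh z : v \in B -> z \in B -> z \in S -> c z != a.
  move=> vB zB zS; case/setUP: BM => BM; [move: aM1 tiM1 | move: aM2 tiM2] => aM tiM;
    by apply: contraNneq aM => <-; apply: block_colorsP tiM BM vB _; rewrite inE zB.
rewrite !inE; case: (eqVneq x v) => [->|xv]; case: (eqVneq y v) => [->|yv] //=.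
- rewrite eqxx (negbTE yv) => /andP[vB _] /andP[yB yS] ay.
  by case/negP: (fresh y vB yB yS); rewrite ay.
- rewrite eqxx (negbTE xv) => /andP[xB xS] /andP[vB _] xa.
  by case/negP: (fresh x vB xB xS); rewrite xa.
- by rewrite (negbTE xv) (negbTE yv) => xBS yBS; apply: (proper_c _ BM); rewrite inE.
Qed.

Section KempeChain.

Variables (S : {set T}) (c : T -> 'I_w) (v u : T) (a b : 'I_w).
Hypotheses (proper_c : proper_on S c) (a_free1 : a \notin block_colors M1 S c v).
Hypotheses (b_free2 : b \notin block_colors M2 S c v).
Hypotheses (uS : u \in pblock M2 v :&: S) (cu : c u = a).

(* The chain is directed: it leaves an a-point through its M1-block and a b-point
   through its M2-block.  So a b-point of the chain is entered from an a-point of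
   its M1-block, and no b-point of the M1-block of v, which has no a-point, is
   recoloured to a. *)
Local Definition chain_step : rel T := fun x y =>
  [&& x \in S, y \in S &
   [&& c x == a, c y == b & x \in pblock M1 y] || [&& c x == b, c y == a & x \in pblock M2 y]].

Local Definition chain := [set z | connect chain_step u z].

Local Definition recolored z := if z \in chain then tperm a b (c z) else c z.

Let neq_ab : a != b.
Proof. by apply: contraNneq b_free2 => <-; rewrite -cu imset_f. Qed.

Let chain_u : u \in chain.
Proof. by rewrite inE connect0. Qed.

Let chain_closed x y : x \in chain -> chain_step x y -> y \in chain.
Proof. by rewrite !inE => ux /connect1; apply: connect_trans. Qed.

Let chain_pred z : z \in chain -> z = u \/ exists2 x, x \in chain & chain_step x z.
Proof.
by rewrite inE => /connect_lastP[-> | [x ux xz]]; [left | right; exists x; rewrite ?inE].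
Qed.

Let chain_colors z : z \in chain -> c z = a \/ c z = b.
Proof.
by case/chain_pred => [-> | [x _ /and3P[_ _ /orP[/and3P[_ /eqP-> _] | /and3P[_ /eqP-> _]]]]];
  [left | right | left].
Qed.

Let pred_of_b z : z \in chain -> c z = b ->
  exists2 x, x \in chain & [/\ x \in S, c x = a & x \in pblock M1 z].
Proof.
case/chain_pred => [-> | [x chx /and3P[xS _ /orP[/and3P[/eqP xa _ xz] | /and3P[_ /eqP-> _]]]]].
- by rewrite cu => /eqP; rewrite (negbTE neq_ab).
- by exists x.
- by move/eqP; rewrite (negbTE neq_ab).
Qed.

Let pred_of_a z : z \in chain -> c z = a -> z != u ->
  exists2 x, x \in chain & [/\ x \in S, c x = b & x \in pblock M2 z].
Proof.
case/chain_pred => [-> | [x chx /and3P[xS _ /orP[/and3P[_ /eqP-> _] | /and3P[/eqP xb _ xz]]]]].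
- by rewrite eqxx.
- by move/eqP; rewrite eq_sym (negbTE neq_ab).
- by exists x.
Qed.

Let recolored_boundary B x y : B \in M1 :|: M2 -> x \in B :&: S -> y \in B :&: S ->
  x \in chain -> y \notin chain -> tperm a b (c x) != c y.
Proof.
move=> BM /setIP[xB xS] /setIP[yB yS] chx; apply: contra => /eqP cxy.
have same_color z : z \in B :&: S -> c z = c y -> z = y.
  by move=> zBS czy; apply: (proper_c BM) => //; rewrite inE yB.
have [cx | cx] := chain_colors chx; rewrite cx ?tpermL ?tpermR in cxy.
- case/setUP: BM => BM.
    apply: chain_closed chx _; rewrite /chain_step xS yS cx -cxy !eqxx.
    by rewrite (def_pblock tiM1 BM yB) xB.
  have [xu | nxu] := eqVneq x u.
    have vB : pblock M2 v = B.
      rewrite -(def_pblock tiM2 BM xB) xu; case/setIP: uS => uv _.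
      exact/esym/same_pblock.
    by case/negP: b_free2; rewrite cxy /block_colors vB imset_f // inE yB.
  have [x' chx' [x'S cx' x'x]] := pred_of_a chx cx nxu.
  have x'B : x' \in B by rewrite -(def_pblock tiM2 BM xB).
  by rewrite -(same_color x') // ?inE ?x'B // cx'.
- case/setUP: BM => BM; last first.
    apply: chain_closed chx _; rewrite /chain_step xS yS cx -cxy !eqxx orbC.
    by rewrite (def_pblock tiM2 BM yB) xB.
  have [x' chx' [x'S cx' x'x]] := pred_of_b chx cx.
  have x'B : x' \in B by rewrite -(def_pblock tiM1 BM xB).
  by rewrite -(same_color x') // ?inE ?x'B // cx'.
Qed.

Let proper_recolored : proper_on S recolored.
Proof.
move=> B BM x y xBS yBS; rewrite /recolored.
case: ifP => chx; case: ifP => chy.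
- by move/perm_inj; apply: (proper_c BM).
- by move/eqP; rewrite (negbTE (recolored_boundary BM xBS yBS chx (negbT chy))).
- by move/esym/eqP; rewrite (negbTE (recolored_boundary BM yBS xBS chy (negbT chx))).
- exact: (proper_c BM).
Qed.

Let a_free1_recolored : a \notin block_colors M1 S recolored v.
Proof.
apply/imsetP => -[y yvS]; rewrite /recolored; case: ifP => chy ya; last first.
  by case/negP: a_free1; rewrite ya imset_f.
have cy : c y = b by rewrite -(tpermK a b (c y)) -ya tpermL.
have [x' chx' [x'S cx' x'y]] := pred_of_b chy cy.
case/negP: a_free1; rewrite -cx' imset_f // inE x'S andbT.
by case/setIP: yvS => /(same_pblock tiM1) <-.
Qed.

Let a_free2_recolored : a \notin block_colors M2 S recolored v.
Proof.
apply/imsetP => -[y yvS]; rewrite /recolored; case: ifP => chy ya.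
  have cy : c y = b by rewrite -(tpermK a b (c y)) -ya tpermL.
  by case/negP: b_free2; rewrite -cy imset_f.
have vM : pblock M2 v \in M1 :|: M2.
  by case/setIP: uS => /mem_pblock_cover/(pblock_mem (P := M2)) vM2 _; rewrite inE vM2 orbT.
have yu : y = u by apply: (proper_c vM); rewrite // -ya cu.
by rewrite yu chain_u in chy.
Qed.

Lemma kempe_recoloring : exists c' : T -> 'I_w,
  [/\ proper_on S c', a \notin block_colors M1 S c' v & a \notin block_colors M2 S c' v].
Proof. by exists recolored. Qed.

End KempeChain.

Lemma two_matchings_coloring :
  exists c : T -> 'I_w, forall B, B \in M1 :|: M2 -> {in B &, injective c}.
Proof.
suff [c proper_c] : exists c, proper_on [set:: enum [set: T]] c.
  by exists c => B BM x y xB yB; apply: (proper_c _ BM); rewrite !inE mem_enum inE ?xB ?yB.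
elim: (enum _) => [|v s [c proper_c]].
  by exists (fun=> Ordinal w_gt0) => B _ x y; rewrite !inE andbF.
rewrite set_cons; have [vS | vS] := boolP (v \in [set:: s]).
  by exists c; rewrite (setUidPr _) // sub1set.
have [a a_free1] := free_block_color c leM1 vS.
have [b b_free2] := free_block_color c leM2 vS.
have [/imsetP[u uS cu] | a_free2] := boolP (a \in block_colors M2 [set:: s] c v).
  have [c' [proper_c' a_free1' a_free2']] :=
    kempe_recoloring proper_c a_free1 b_free2 uS (esym cu).
  by exists [eta c' with v |-> a]; apply: proper_on_extend.
by exists [eta c with v |-> a]; apply: proper_on_extend.
Qed.

End TwoMatchingColoring.

Lemma ord2_cases (j : 'I_2) : j = ord0 \/ j = ord_max.
Proof. by case: j => -[|[|//]] j_lt; [left | right]; apply: val_inj. Qed.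

Definition block_word n w (c : 'I_n -> 'I_w) (t : {ffun 'I_w -> bool}) (s : bool)
  (e : {set 'I_n}) : word 3 n :=
  [ffun v => inord (if v \in e then (t (c v) (+) s).+1 else 0)].

Lemma block_wordE n w (c : 'I_n -> 'I_w) t s e v :
  block_word c t s e v = (if v \in e then (t (c v) (+) s).+1 else 0) :> nat.
Proof. by rewrite ffunE inordK //; case: ifP; case: (_ (+) _). Qed.

Lemma supp_block_word n w (c : 'I_n -> 'I_w) t s e : supp (block_word c t s e) = e.
Proof. by apply/setP => v; rewrite inE block_wordE; case: ifP. Qed.

Lemma block_word_pattern_inj n w (c : 'I_n -> 'I_w) s (e : {set 'I_n}) t t' :
  (forall a, exists2 v, v \in e & c v = a) ->
  block_word c t s e = block_word c t' s e -> t = t'.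
Proof.
move=> c_onto eq_words; apply/ffunP => a; have [v ve <-] := c_onto a.
have /eqP := congr1 (fun x : word 3 n => val (x v)) eq_words.
by rewrite /= !block_wordE ve eqSS; case: (t _); case: (t' _); case: (s).
Qed.

Section BlockCodes.

Variables (n w : nat) (I : finType) (F : I -> 'I_2 -> {set {set 'I_n}}).
Variable col : I -> 'I_n -> 'I_w.

Definition blocks i := F i ord0 :|: F i ord_max.

Definition block_code i t :=
  [set block_word (col i) t (e \in F i ord_max) e | e in blocks i].

Hypotheses (F_size : forall i j e, e \in F i j -> #|e| = w)
  (F_uniq : forall i j i' j' e, e \in F i j -> e \in F i' j' -> (i, j) = (i', j'))
  (F_cover : forall e : {set 'I_n}, #|e| = w -> exists i, e \in blocks i)
  (F_card : forall i j, #|F i j| = n %/ w) (F_ti : forall i j, trivIset (F i j))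
  (blocks_meet : forall i e f, e \in blocks i -> f \in blocks i -> e != f -> #|e :&: f| <= 1)
  (col_inj : forall i e, e \in blocks i -> {in e &, injective (col i)}).

Lemma blocks_size i e : e \in blocks i -> #|e| = w.
Proof. by case/setUP; apply: F_size. Qed.

Lemma blocks_uniq i i' e : e \in blocks i -> e \in blocks i' -> i = i'.
Proof. by case/setUP=> eF /setUP[] eF'; have [] := F_uniq eF eF'. Qed.

Lemma notin_F_max i e : e \in F i ord0 -> e \notin F i ord_max.
Proof. by move=> eF0; apply/negP => /(F_uniq eF0) []. Qed.

Lemma col_onto i e : e \in blocks i -> forall a, exists2 v, v \in e & col i v = a.
Proof.
move=> eB a; have onto : col i @: e = setT.
  apply/eqP; rewrite eqEcard subsetT cardsT card_ord (card_in_imset (col_inj eB)).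
  by rewrite (blocks_size eB) leqnn.
have : a \in col i @: e by rewrite onto.
by case/imsetP=> v ve ->; exists v.
Qed.

Lemma block_code_dist i t x y :
  x \in block_code i t -> y \in block_code i t -> x != y -> 2 * w - 1 <= hdist x y.
Proof.
case/imsetP=> e eB -> /imsetP[f fB ->] neq_xy.
have neq_ef : e != f by apply: contraNneq neq_xy => ->.
have sides v : v \in e -> v \in f -> (e \in F i ord_max) != (f \in F i ord_max).
  move=> ve vf; case/setUP: eB => eF; case/setUP: fB => fF.
  - by case/eqP: neq_ef; rewrite -(def_pblock (F_ti _ _) eF ve) (def_pblock _ fF vf).
  - by rewrite (negbTE (notin_F_max eF)) fF.
  - by rewrite eF (negbTE (notin_F_max fF)).
  - by case/eqP: neq_ef; rewrite -(def_pblock (F_ti _ _) eF ve) (def_pblock _ fF vf).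
have: #|e :|: f| <= hdist (block_word (col i) t (e \in F i ord_max) e)
                               (block_word (col i) t (f \in F i ord_max) f).
  apply: subset_leq_card; apply/subsetP => v; rewrite !inE -val_eqE /= !block_wordE.
  case: (boolP (v \in e)) => ve; case: (boolP (v \in f)) => vf //=.
  by rewrite eqSS; move: (sides v ve vf); case: (t _) (e \in _) (f \in _) => [] [] [].
have := cardsUI e f; have := blocks_meet eB fB neq_ef.
by rewrite (blocks_size eB) (blocks_size fB); lia.
Qed.

Lemma card_block_code i t : #|block_code i t| = 2 * (n %/ w).
Proof.
rewrite card_in_imset => [|e f _ _ /(congr1 (@supp 3 n))]; last by rewrite !supp_block_word.
rewrite cardsU !F_card; have -> : F i ord0 :&: F i ord_max = set0.
  by apply/setP => e; rewrite !inE; apply/negP => /andP[/notin_F_max/negP].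
by rewrite cards0 subn0 addnn mul2n.
Qed.

Lemma block_code_sub i t : block_code i t \subset Hqnw 3 n w.
Proof.
apply/subsetP => _ /imsetP[e eB ->].
by rewrite inE -[wt _]/#|supp _| supp_block_word (blocks_size eB).
Qed.

Lemma block_codes_eq i t i' t' x :
  x \in block_code i t -> x \in block_code i' t' -> (i, t) = (i', t').
Proof.
case/imsetP=> e eB -> /imsetP[f fB' eq_words].
have ef : e = f.
  by rewrite -(supp_block_word (col i) t (e \in F i ord_max) e) eq_words supp_block_word.
subst f; have ii' := blocks_uniq eB fB'; subst i'.
by rewrite (block_word_pattern_inj (col_onto eB) eq_words).
Qed.

Lemma mem_block_codes x : x \in Hqnw 3 n w -> exists i t, x \in block_code i t.
Proof.
rewrite inE => /eqP /F_cover[i eB]; set s := supp x \in F i ord_max.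
exists i, [ffun a => if [pick v in supp x | col i v == a] is Some v
                     then (x v == 2 :> nat) (+) s else false].
apply/imsetP; exists (supp x) => //; apply/ffunP => v; apply/val_inj.
rewrite /= block_wordE ffunE.
case: ifP => vx; last by move: vx; rewrite inE => /negbFE/eqP.
case: pickP => [v' /andP[v'x /eqP cv] | /(_ v)]; last by rewrite vx eqxx.
rewrite (col_inj eB v'x vx cv) addbK; move: vx; rewrite inE.
by case: (x v) => -[|[|[|]]].
Qed.

Hypothesis k_gt0 : 0 < n %/ w.

Lemma block_code_neq0 i t : block_code i t != set0.
Proof. by rewrite -card_gt0 card_block_code muln_gt0. Qed.

Lemma block_codes_partition :
  partition [set block_code p.1 p.2 | p in [set: I * {ffun 'I_w -> bool}]] (Hqnw 3 n w).
Proof.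
have [] := @indexed_partition _ _ [set: I * {ffun 'I_w -> bool}] (fun p => block_code p.1 p.2).
- move=> [i t] [i' t'] _ _ neq; rewrite -setI_eq0; apply/set0Pn => -[x /setIP[xC xC']].
  by rewrite (block_codes_eq xC' xC) eqxx in neq.
- by move=> [i t] _; apply: block_code_neq0.
move=> partP _; suff <- : cover [set block_code p.1 p.2 | p in [set: I * _]] = Hqnw 3 n w by [].
apply/eqP; rewrite eqEsubset; apply/andP; split.
  by apply/bigcupsP => _ /imsetP[[i t] _ ->]; apply: block_code_sub.
apply/subsetP => x /mem_block_codes[i [t xC]]; apply/bigcupP.
by exists (block_code i t) => //; apply/imsetP; exists (i, t).
Qed.

Lemma block_code_optimal i t :
  (n %% w).*2 < w -> optimal_code (2 * w - 1) w (block_code i t).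
Proof.
move=> small_rem; have w_gt0 : 0 < w by case: w small_rem.
have codeC : is_code (2 * w - 1) w (block_code i t).
  rewrite /is_code block_code_neq0 block_code_sub /=.
  by apply/'forall_in_forall_inP => x xC y yC; apply/implyP; apply: block_code_dist xC yC.
rewrite /optimal_code codeC eqn_leq (leq_bigmax_cond _ codeC) /=.
apply: leq_trans (Aq_le_div _ _ w_gt0) _; rewrite card_block_code.
rewrite -ltnS ltn_divLR // [n in 3.-1 * n](divn_eq n w); lia.
Qed.

End BlockCodes.

Theorem theorem3p3 (n w : nat) :
  0 < w -> w <= n ->
  (n %/ w) %| 'C(n, w) -> ~~ odd (rr n w) ->
  (n %% w).*2 < w ->
  (exists F : 'I_(rr n w %/ 2) -> 'I_2 -> {set {set 'I_n}}, good_coloring F) ->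
  exists P : {set {set word 3 n}}, TOC (2 * w - 1) w P.
Proof.
move=> w_gt0 w_le_n _ _ small_rem [F [[F_size [F_exists F_reg]] F_pack]].
have F_card i j : #|F i j| = n %/ w := (F_reg i j).2.
have F_ti i j : trivIset (F i j).
  by have [regF cardF] := F_reg i j; apply: almost_regular_trivIset (F_size i j) regF cardF.
have F_uniq i j i' j' e : e \in F i j -> e \in F i' j' -> (i, j) = (i', j').
  move=> eF eF'; have [ij [_ uniq_e]] := F_exists e (F_size _ _ _ eF).
  by rewrite -(uniq_e (i, j) eF) (uniq_e (i', j') eF').
have F_cover (e : {set 'I_n}) : #|e| = w -> exists i, e \in blocks F i.
  case/F_exists => -[i j] [eF _]; exists i; rewrite inE.
  by case: (ord2_cases j) eF => -> ->; rewrite ?orbT.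
have blocks_meet i e f : e \in blocks F i -> f \in blocks F i -> e != f -> #|e :&: f| <= 1.
  have sub : blocks F i \subset \bigcup_(j < 2) F i j.
    by apply/subsetP => g /setUP[] gF; apply/bigcupP; [exists ord0 | exists ord_max].
  by move=> /(subsetP sub) eA /(subsetP sub); apply: packing_meet_le1 (F_pack i) eA.
have size_le i j e : e \in F i j -> #|e| <= w by move/F_size ->.
have [col col_inj] := fin_all_exists (fun i => two_matchings_coloring w_gt0
  (F_ti i ord0) (F_ti i ord_max) (size_le i ord0) (size_le i ord_max)).
have k_gt0 : 0 < n %/ w by rewrite divn_gt0.
exists [set block_code F col p.1 p.2 | p in [set: 'I_(rr n w %/ 2) * {ffun 'I_w -> bool}]].
split; first exact: block_codes_partition.
by move=> _ /imsetP[[i t] _ ->]; apply: block_code_optimal.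
Qed.
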